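(* Suppose $\mathcal U(x)=\{(u_0,u_1)\in(\mathbb R^{n^0_u}_+\times\mathbb U_{d_0})\times(\mathbb R^{n^1_u}_+\times\mathbb U_{d_1}): F_0(x)u_0+F_1(x)u_1\le h+Gx\}$ and let $\mathcal U_1(x,u_0)=\{u_1\in\mathbb R^{n^1_u}_+\times\mathbb U_{d_1}: F_1(x)u_1\le h+Gx-F_0(x)u_0\}$. Define $w_{(u_0,u_1)}=\min_{x\in\mathcal X,\ (u_0,u_1')\in\mathcal U(x)}\Big[c_1x+\max_{u_1\in\mathcal U_1(x,u_0)}\min_{y\in\mathcal Y(x,(u_0,u_1))}c_2y\Big]$, where $u_1'$ is a copy (replicate) of the variable $u_1$ used only in the outer minimization. Then $w_R\le w_{(u_0,u_1)}\le w^*$, and if $w_{(u_0,u_1)}=+\infty$ then $w^*=+\infty$.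
   Context: $\mathcal X=\{x\in\mathbb R^{n_x}_+\times\mathbb Z^{m_x}_+: Ax\ge b\}$; $\mathbb U_{d_0},\mathbb U_{d_1}$ are bounded sets of nonnegative integer vectors; $F_0(x),F_1(x)$ depend on $x$; $\mathcal Y(x,u)=\{y=(y_c,y_d)\in\mathbb R^{n_y}_+\times\mathbb Y_d: B_{2,c}y_c+B_{2,d}y_d\ge d-B_1x-Eu\}$ with $\mathbb Y_d\subseteq\mathbb Z^{m_y}_+$ bounded; $c_1,c_2$ row vectors; a minimum over an empty set is $+\infty$. $w^*=\min_{x\in\mathcal X}\big[c_1x+\max_{u\in\mathcal U(x)}\min_{y\in\mathcal Y(x,u)}c_2y\big]$ and $w_R=\min\{c_1x+c_2y: x\in\mathcal X,u\in\mathcal U(x),y\in\mathcal Y(x,u)\}$. Standing assumptions: $\mathcal U(x)\neq\emptyset$ and bounded for all $x\in\mathcal X$, and $w_R>-\infty$. *)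

(* matrices over an abstract R : realType, extended reals
   from MathComp-Analysis for optimal values (inf/sup, empty inf = +oo). *)
From HB Require Import structures.
From mathcomp Require Import all_boot all_order all_algebra.
From mathcomp Require Import all_classical all_reals ereal.
Set Implicit Arguments. Unset Strict Implicit. Unset Printing Implicit Defensive.
Import Order.TTheory GRing.Theory Num.Theory.
Local Open Scope ring_scope.
Local Open Scope classical_set_scope.

Section Defs.
Variable R : realType.

Definition mle (p q : nat) (A B : 'M[R]_(p, q)) : Prop :=
  forall i j, A i j <= B i j.

Definition dotv (n : nat) (c : 'rV[R]_n) (x : 'cV[R]_n) : R := (c *m x) 0 0.

Definition natvec (n : nat) (v : 'cV[R]_n) : Prop :=
  forall i, v i 0 \is a Num.nat.

Definition bounded_vset (n : nat) (S : set 'cV[R]_n) : Prop :=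
  exists M : R, forall v, S v -> forall i, `|v i 0| <= M.

Definition in_Rplus_times (n k : nat) (D : set 'cV[R]_k) (v : 'cV[R]_(n + k)) : Prop :=
  (forall i, 0 <= usubmx v i 0) /\ D (dsubmx v).

Definition in_RZplus (n m : nat) (v : 'cV[R]_(n + m)) : Prop :=
  (forall i, 0 <= usubmx v i 0) /\ natvec (dsubmx v).
End Defs.

From HB Require Import structures.
From mathcomp Require Import all_boot all_order all_algebra.
From mathcomp Require Import all_classical all_reals ereal.
Set Implicit Arguments. Unset Strict Implicit. Unset Printing Implicit Defensive.
Import Order.TTheory GRing.Theory Num.Theory.
Local Open Scope ring_scope.
Local Open Scope classical_set_scope.

(* Once (u0,u1') lies in U(x), the slice U1(x,u0) is exactly the set of u1
   with (u0,u1) in U(x).  The inner maximum of the replicated problem thus runs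
   over a part of U(x), which gives w_(u0,u1) <= w^*, and this part contains
   the replicated point (u0,u1') itself, whose objective already dominates
   w_R. *)

Lemma mleBrDl (R : realType) (p q : nat) (A B C : 'M[R]_(p, q)) :
  mle B (C - A) <-> mle (A + B) C.
Proof.
by split=> le_BCA i j; have := le_BCA i j; rewrite !mxE lerBrDl.
Qed.

Lemma lb_EFinD_ereal_inf (R : realType) (a : \bar R) (r : R) (S : set \bar R) :
  (forall y, S y -> (a <= r%:E + y)%E) -> (a <= r%:E + ereal_inf S)%E.
Proof.
move=> lb_S; rewrite addeC -leeBlDr //; apply/ereal_infP => y Sy.
by rewrite leeBlDr // addeC; apply: lb_S.
Qed.

Section ReplicatedRecourse.
Variables (R : realType) (T W : Type) (p q : nat).
Variables (X : set T) (U : T -> set 'cV[R]_(p + q)).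
Variables (U1 : T -> 'cV[R]_p -> set 'cV[R]_q).
Variables (Y : T -> 'cV[R]_(p + q) -> set W) (f : T -> R) (g : W -> R).

Hypothesis U1_slice : forall x u0 u1' u1,
  U x (col_mx u0 u1') -> U1 x u0 u1 <-> U x (col_mx u0 u1).

Let Q x u := ereal_inf [set (g y)%:E | y in Y x u].

Definition relaxed_value := ereal_inf
  [set z | exists x u y, [/\ X x, U x u, Y x u y & z = (f x + g y)%:E]].

Definition replicated_value := ereal_inf
  [set z | exists x u0 u1', [/\ X x, U x (col_mx u0 u1') &
      z = ((f x)%:E + ereal_sup [set Q x (col_mx u0 u1) | u1 in U1 x u0])%E]].

Definition robust_value := ereal_inf
  [set ((f x)%:E + ereal_sup [set Q x u | u in U x])%E | x in X].

Lemma relaxed_value_le x u : X x -> U x u -> (relaxed_value <= (f x)%:E + Q x u)%E.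
Proof.
move=> Xx Uxu; apply: lb_EFinD_ereal_inf => _ [y Yy <-].
by rewrite -EFinD; apply: ereal_inf_lbound; exists x, u, y.
Qed.

Lemma relaxed_le_replicated : (relaxed_value <= replicated_value)%E.
Proof.
apply/ereal_infP => _ [x [u0 [u1' [Xx Uxu ->]]]].
apply: (le_trans (relaxed_value_le Xx Uxu)); apply: leeD2l.
apply: le_ereal_sup_tmp; exists (Q x (col_mx u0 u1')) => //.
by exists u1' => //; apply/(U1_slice _ Uxu).
Qed.

Lemma replicated_le_robust :
  (forall x, X x -> U x !=set0) -> (replicated_value <= robust_value)%E.
Proof.
move=> U_neq0; apply/ereal_infP => _ [x Xx <-].
have [u Uxu] := U_neq0 x Xx.
rewrite -(vsubmxK u) in Uxu.
apply: le_trans (ereal_inf_lbound _) _.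
  by exists x, (usubmx u), (dsubmx u).
apply: leeD2l; apply: ereal_sup_le => _ [u1 U1u1 <-].
by exists (col_mx (usubmx u) u1) => //; apply/(U1_slice _ Uxu).
Qed.

End ReplicatedRecourse.

Theorem corollary7 (R : realType)
  (nx mx pA qU n0 k0 n1 k1 ny my r : nat)
  (A : 'M[R]_(pA, nx + mx)) (b : 'cV[R]_pA)
  (F0 : 'cV[R]_(nx + mx) -> 'M[R]_(qU, n0 + k0))
  (F1 : 'cV[R]_(nx + mx) -> 'M[R]_(qU, n1 + k1))
  (h : 'cV[R]_qU) (G : 'M[R]_(qU, nx + mx))
  (Ud0 : set 'cV[R]_k0) (Ud1 : set 'cV[R]_k1) (Yd : set 'cV[R]_my)
  (B1 : 'M[R]_(r, nx + mx)) (E : 'M[R]_(r, (n0 + k0) + (n1 + k1)))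
  (B2c : 'M[R]_(r, ny)) (B2d : 'M[R]_(r, my)) (d : 'cV[R]_r)
  (c1 : 'rV[R]_(nx + mx)) (c2 : 'rV[R]_(ny + my)) :
  let X := [set x : 'cV[R]_(nx + mx) | in_RZplus x /\ mle b (A *m x)] in
  let U (x : 'cV[R]_(nx + mx)) :=
    [set u : 'cV[R]_((n0 + k0) + (n1 + k1)) |
      [/\ in_Rplus_times Ud0 (usubmx u), in_Rplus_times Ud1 (dsubmx u) &
          mle (F0 x *m usubmx u + F1 x *m dsubmx u) (h + G *m x)]] in
  let U1 (x : 'cV[R]_(nx + mx)) (u0 : 'cV[R]_(n0 + k0)) :=
    [set u1 : 'cV[R]_(n1 + k1) |
      in_Rplus_times Ud1 u1 /\ mle (F1 x *m u1) (h + G *m x - F0 x *m u0)] in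
  let Y (x : 'cV[R]_(nx + mx)) (u : 'cV[R]_((n0 + k0) + (n1 + k1))) :=
    [set y : 'cV[R]_(ny + my) |
      in_Rplus_times Yd y /\
      mle (d - B1 *m x - E *m u) (B2c *m usubmx y + B2d *m dsubmx y)] in
  let Q x u := ereal_inf [set (dotv c2 y)%:E | y in Y x u] in
  let wstar := ereal_inf
    [set ((dotv c1 x)%:E + ereal_sup [set Q x u | u in U x])%E | x in X] in
  let wR := ereal_inf
    [set z | exists x u y, [/\ X x, U x u, Y x u y &
                              z = (dotv c1 x + dotv c2 y)%:E]] in
  let wU := ereal_inf
    [set z | exists x u0 u1', [/\ X x, U x (col_mx u0 u1') &
        z = ((dotv c1 x)%:E +
             ereal_sup [set Q x (col_mx u0 u1) | u1 in U1 x u0])%E]] in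
  (forall v, Ud0 v -> natvec v) -> bounded_vset Ud0 ->
  (forall v, Ud1 v -> natvec v) -> bounded_vset Ud1 ->
  (forall v, Yd v -> natvec v) -> bounded_vset Yd ->
  (forall x, X x -> U x !=set0 /\ bounded_vset (U x)) ->
  (-oo < wR)%E ->
  [/\ (wR <= wU)%E, (wU <= wstar)%E & (wU = +oo%E -> wstar = +oo%E)].
Proof.
(* Only the nonemptiness of the uncertainty sets U(x) is needed. *)
move=> X U U1 Y Q wstar wR wU _ _ _ _ _ _ U_neq0 _.
have U1_slice x u0 u1' u1 : U x (col_mx u0 u1') -> U1 x u0 u1 <-> U x (col_mx u0 u1).
  rewrite /U /U1 /= !col_mxKu !col_mxKd => -[Ud0u0 _ _].
  by split=> [[Ud1u1 /mleBrDl]|[_ Ud1u1 /mleBrDl]].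
have wR_le_wU : (wR <= wU)%E :=
  relaxed_le_replicated X Y (dotv c1) (dotv c2) U1_slice.
have wU_le_wstar : (wU <= wstar)%E.
  by apply: (replicated_le_robust Y (dotv c1) (dotv c2) U1_slice) => x /U_neq0[].
by split=> // wU_oo; apply/eqP; rewrite -leye_eq -wU_oo.
Qed.
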